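(* Let $n\ge 1$ and $k\ge 1$ be integers, let $A=(a_{pq})$ be a real $n\times n$ matrix, and let $j\in\{1,\dots,n\}$ be such that $a_{1j}>0$. Suppose $\lambda>0$ is a simple eigenvalue of $A$ and $A\mathbf u=\lambda\mathbf u$, $\mathbf v^TA=\lambda\mathbf v^T$ for some entrywise positive vectors $\mathbf u,\mathbf v\in\mathbb R^n$. Define the real $(k+n)\times(k+n)$ matrix $B=(b_{pq})$ by $$b_{pq}=\begin{cases} 2\lambda,&\text{if }p=q\in\{1,\dots,k\};\\ -\lambda,&\text{if }(p,q)\in\{(k,k+j)\}\cup\{(1,2),(2,3),\dots,(k-1,k)\};\\ -a_{1j},&\text{if }(p,q)=(k+1,1);\\ a_{p-k,q-k},&\text{if }p,q\in\{k+1,\dots,k+n\}\text{ and }(p,q)\neq(k+1,k+j);\\ 2a_{1j},&\text{if }(p,q)=(k+1,k+j);\\ 0,&\text{otherwise}. \end{cases}$$ Then $\lambda$ is a simple eigenvalue of $B$, and $B\mathbf w=\lambda\mathbf w$, $\mathbf z^TB=\lambda\mathbf z^T$, where $w_i=u_j$ and $z_i=\frac{a_{1j}v_1}{\lambda}$ for $1\le i\le k$, and $w_i=u_{i-k}$, $z_i=v_{i-k}$ for $k+1\le i\le k+n$. Consequently, $B$ is algebraically positive.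
   Context: A real square matrix $M$ is algebraically positive if there is a real polynomial $f$ such that every entry of $f(M)$ is positive. A simple eigenvalue is one of algebraic multiplicity one. *)

From mathcomp Require Import all_boot all_order all_algebra.
From mathcomp Require Import reals.
Set Implicit Arguments. Unset Strict Implicit. Unset Printing Implicit Defensive.
Import Order.TTheory GRing.Theory Num.Theory.
Local Open Scope ring_scope.

Definition simple_eigenvalue (R : fieldType) (m : nat) (M : 'M[R]_m) (lam : R) : Prop :=
  mup lam (char_poly M) = 1%N.

Definition algebraically_positive (R : realFieldType) (m : nat) (M : 'M[R]_m.+1) : Prop :=
  exists f : {poly R}, forall p q, 0 < (horner_mx M f) p q.

(* The matrix B of the theorem, with 0-based indices: rows/columns 0..k-1
   (here k = k'.+1) form the first block, k..k+n-1 the second (n = n'.+1);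
   j is 0-based, so paper's a_{1j} is A ord0 j. *)
Definition Bmat (R : nzRingType) (k' n' : nat) (A : 'M[R]_n'.+1) (j : 'I_n'.+1) (lam : R)
  : 'M[R]_(k'.+1 + n'.+1) :=
  \matrix_(p, q)
    match split p, split q with
    | inl p1, inl q1 =>
        if p1 == q1 then 2 * lam
        else if (q1 : nat) == (p1 : nat).+1 then - lam else 0
    | inl p1, inr q2 => if (p1 == ord_max) && (q2 == j) then - lam else 0
    | inr p2, inl q1 => if (p2 == ord0) && (q1 == ord0) then - A ord0 j else 0
    | inr p2, inr q2 => if (p2 == ord0) && (q2 == j) then 2 * A ord0 j else A p2 q2
    end.

(* B w = lam w and z^T B = lam z^T are block computations, the upper left block
   of B being lam (1 + D) for the invertible bidiagonal difference matrix D.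
   If B y = lam y with y = (y1, y2), the first k rows say D y1 = (y2)_j e_k, so
   y1 is constant equal to (y2)_j, and the last n rows then reduce to
   A y2 = lam y2; since lam is simple for A, y is a multiple of w.  An
   eigenspace spanned by w together with a left eigenvector z with z^T w <> 0
   forces lam to be simple.  Finally, if char_poly B = (X - lam) q, then
   q(lam) <> 0 and by Cayley-Hamilton the columns of q(B) are right and its rows
   left lam-eigenvectors, so q(B) is a nonzero multiple of the positive matrix
   w z^T. *)

From mathcomp Require Import all_boot all_order all_algebra.
From mathcomp Require Import reals.
From mathcomp Require Import ring.
Import Order.TTheory GRing.Theory Num.Theory.
Local Open Scope ring_scope.

Set Implicit Arguments. Unset Strict Implicit. Unset Printing Implicit Defensive.

Section Eigenspaces.
Variable F : fieldType.

Definition spans_eigenspace n (M : 'M[F]_n) (lam : F) (x : 'cV[F]_n) : Prop :=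
  forall y, M *m y = lam *: y -> exists c, y = c *: x.

Lemma char_poly_trmx n (M : 'M[F]_n) : char_poly M^T = char_poly M.
Proof.
rewrite /char_poly -det_tr; congr (\det _).
by apply/matrixP => i j; rewrite !mxE eq_sym.
Qed.

Lemma char_poly_conj n (P M : 'M[F]_n) : P \in unitmx ->
  char_poly (invmx P *m M *m P) = char_poly M.
Proof.
move=> P_unit; rewrite /char_poly /char_poly_mx.
have -> : 'X%:M - map_mx polyC (invmx P *m M *m P) =
    map_mx polyC (invmx P) *m ('X%:M - map_mx polyC M) *m map_mx polyC P.
  rewrite mulmxBr mulmxBl !map_mxM mul_mx_scalar -scalemxAl -map_mxM.
  by congr (_ - _); rewrite -map_mxM mulVmx // map_mx1 scalemx1.
rewrite !det_mulmx mulrC mulrA -det_mulmx -map_mxM mulmxV //.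
by rewrite map_mx1 det1 mul1r.
Qed.

Lemma root_char_eigencolP n (M : 'M[F]_n) a :
  reflect (exists2 v : 'cV_n, M *m v = a *: v & v != 0) (root (char_poly M) a).
Proof.
rewrite -char_poly_trmx -eigenvalue_root_char.
apply: (iffP eigenvalueP) => -[v Mv v_neq0]; exists v^T; rewrite ?trmx_eq0 //.
  by rewrite -[M]trmxK -trmx_mul Mv linearZ.
by rewrite -trmx_mul Mv linearZ.
Qed.

Lemma simple_eigenvalue_factor n (M : 'M[F]_n) lam c :
  char_poly M = ('X - lam%:P) * c -> simple_eigenvalue M lam <-> ~~ root c lam.
Proof.
move=> charM; have c_neq0 : c != 0.
  apply: contraTneq (monic_neq0 (char_poly_monic M)) => c0.
  by rewrite charM c0 mulr0 eqxx.
rewrite /simple_eigenvalue charM mupM ?polyXsubC_eq0 // (mup_XsubCX 1) eqxx.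
split=> [|/mupNroot -> //].
rewrite add1n => -[c_lam].
by rewrite -dvdp_XsubCl XsubC_dvd // c_lam.
Qed.

Lemma char_poly_eigencol n (N : 'M[F]_n) i lam :
  col i N = lam *: delta_mx i 0 ->
  char_poly N = ('X - lam%:P) * char_poly (row' i (col' i N)).
Proof.
move=> Ni; have N_i k : N k i = (k == i)%:R * lam.
  by have := congr1 (fun B : 'cV_n => B k 0) Ni; rewrite !mxE andbT mulrC.
rewrite /char_poly (expand_det_col _ i) (bigD1 i) //= big1 ?addr0.
  rewrite !mxE N_i eqxx mul1r mulr1n -row'_col'_char_poly_mx; congr (_ * _).
  by rewrite /cofactor addnn -signr_odd odd_double mul1r.
by move=> k /negPf k_neq_i; rewrite !mxE N_i k_neq_i mul0r mulr0n subr0 mul0r.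
Qed.

Lemma row'_mulmx_eigencol n (N : 'M[F]_n) i lam (s : 'cV_n) :
  col i N = lam *: delta_mx i 0 ->
  row' i (N *m s) = row' i (col' i N) *m row' i s.
Proof.
move=> Ni; apply/matrixP => k b; rewrite !mxE (bigD1_ord i) //=.
have := congr1 (fun B : 'cV_n => B (lift i k) 0) Ni; rewrite !mxE => ->.
rewrite eq_sym (negPf (neq_lift i k)) mulr0 mul0r add0r.
by apply: eq_bigr => l _; rewrite !mxE.
Qed.

Definition col_basis n (x : 'cV[F]_n) i : 'M[F]_n :=
  \matrix_(a, b) if b == i then x a 0 else (a == b)%:R.

Lemma col_basis_delta n (x : 'cV[F]_n) i : col_basis x i *m delta_mx i 0 = x.
Proof. by rewrite -colE; apply/matrixP => a b; rewrite !mxE eqxx ord1. Qed.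

Lemma col_basis_unit n (x : 'cV[F]_n) i : x i 0 != 0 -> col_basis x i \in unitmx.
Proof.
move=> x_i; rewrite unitmxE unitfE; apply/negP => /det0P [v v_neq0 vP].
have vP_at b : (v *m col_basis x i) 0 b = 0 by rewrite vP mxE.
have v_off b : b != i -> v 0 b = 0.
  move=> b_neq_i; move: (vP_at b); rewrite mxE (bigD1 b) //= big1 ?addr0.
    by rewrite mxE (negPf b_neq_i) eqxx mulr1.
  by move=> a a_neq_b; rewrite mxE (negPf b_neq_i) (negPf a_neq_b) mulr0.
have v_i : v 0 i = 0.
  move: (vP_at i); rewrite mxE (bigD1 i) //= big1 ?addr0 => [|a a_neq_i].
    by rewrite mxE eqxx => /eqP; rewrite mulf_eq0 (negPf x_i) orbF => /eqP.
  by rewrite v_off // mul0r.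
move/eqP: v_neq0; apply; apply/matrixP => a b; rewrite ord1 mxE.
by have [->|] := eqVneq b i; [exact: v_i | exact: v_off].
Qed.

Definition col_ins n (i : 'I_n) (s : 'cV[F]_n.-1) : 'cV[F]_n :=
  \col_a oapp (fun k => s k 0) 0 (unlift i a).

Lemma row'_col_ins n (i : 'I_n) s : row' i (col_ins i s) = s.
Proof. by apply/matrixP => k b; rewrite !mxE liftK ord1. Qed.

Lemma row'_delta n (i : 'I_n) : row' i (delta_mx i 0) = 0 :> 'cV[F]_n.-1.
Proof. by apply/matrixP => k b; rewrite !mxE eq_sym (negPf (neq_lift i k)). Qed.

Lemma row'_eq0_delta n (i : 'I_n) (s : 'cV[F]_n) :
  row' i s = 0 -> s = s i 0 *: delta_mx i 0.
Proof.
move=> s'0; apply/matrixP => a b; rewrite ord1 !mxE eqxx.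
have [k ->|->] := unliftP i a; last by rewrite eqxx mulr1.
have := congr1 (fun t : 'cV_n.-1 => t k 0) s'0; rewrite !mxE => ->.
by rewrite eq_sym (negPf (neq_lift i k)) mulr0.
Qed.

(* Replacing e_i by the eigenvector x in the standard basis turns M into N with
   i-th column lam e_i, so char_poly M = (X - lam) char_poly N', where N' is N
   without row and column i. *)
Section Deflation.
Variables (n : nat) (M : 'M[F]_n) (lam : F) (x : 'cV[F]_n) (i : 'I_n).
Hypotheses (Mx : M *m x = lam *: x) (x_i : x i 0 != 0).

Let P := col_basis x i.
Let N := invmx P *m M *m P.
Let P_unit : P \in unitmx. Proof. exact: col_basis_unit. Qed.

Let PN : P *m N = M *m P.
Proof. by rewrite /N !mulmxA mulmxV // mul1mx. Qed.

Let N_i : col i N = lam *: delta_mx i 0.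
Proof.
rewrite colE -[delta_mx i 0](mulKmx P_unit) -!mulmxA col_basis_delta.
by rewrite mulKVmx // Mx -scalemxAr.
Qed.

Let charM : char_poly M = ('X - lam%:P) * char_poly (row' i (col' i N)).
Proof. by rewrite -(char_poly_conj M P_unit); exact: char_poly_eigencol N_i. Qed.

Lemma spans_eigenspace_simple : simple_eigenvalue M lam -> spans_eigenspace M lam x.
Proof.
move=> /(simple_eigenvalue_factor charM) N'_lam y My.
set t := invmx P *m y.
have Nt : N *m t = lam *: t.
  by rewrite -[LHS](mulKmx P_unit) (mulmxA P) PN -mulmxA mulKVmx // My -scalemxAr.
have t'0 : row' i t = 0.
  apply: contraNeq N'_lam => t'_neq0; apply/root_char_eigencolP.
  exists (row' i t); rewrite // -(row'_mulmx_eigencol _ N_i) Nt.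
  by apply/matrixP => k b; rewrite !mxE.
exists (t i 0); rewrite -(mulKVmx P_unit y) -/t {1}(row'_eq0_delta t'0).
by rewrite -scalemxAr col_basis_delta.
Qed.

Lemma simple_eigenvalue_spans (z : 'cV[F]_n) :
  z^T *m M = lam *: z^T -> (z^T *m x) 0 0 != 0 ->
  spans_eigenspace M lam x -> simple_eigenvalue M lam.
Proof.
move=> zM zx spans; apply/(simple_eigenvalue_factor charM).
apply/negP => /root_char_eigencolP [s' N's' s'_neq0].
set s := col_ins i s'; set d := N *m s - lam *: s.
have d'0 : row' i d = 0.
  rewrite /d linearB linearZ /= (row'_mulmx_eigencol _ N_i) row'_col_ins N's'.
  by rewrite subrr.
have zPN : z^T *m P *m N = lam *: (z^T *m P).
  by rewrite -mulmxA PN mulmxA zM scalemxAl.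
have d_i : d i 0 = 0.
  have : z^T *m P *m d = 0 by rewrite /d mulmxBr mulmxA zPN -scalemxAl -scalemxAr subrr.
  rewrite {1}(row'_eq0_delta d'0) -scalemxAr -mulmxA col_basis_delta.
  move/(congr1 (fun B : 'M_1 => B 0 0)); rewrite [X in X = _]mxE [RHS]mxE => /eqP.
  by rewrite mulf_eq0 (negPf zx) orbF => /eqP.
have Ns : N *m s = lam *: s.
  by apply/eqP; rewrite -subr_eq0 -/d (row'_eq0_delta d'0) d_i scale0r.
have [c Psc] : exists c, P *m s = c *: x.
  by apply: spans; rewrite mulmxA -PN -mulmxA Ns scalemxAr.
have : s = c *: delta_mx i 0.
  by rewrite -(mulKmx P_unit s) Psc -(col_basis_delta x i) -/P scalemxAr mulKmx.
move/(congr1 (row' i)); rewrite row'_col_ins linearZ /= row'_delta scaler0 => s'0.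
by rewrite s'0 eqxx in s'_neq0.
Qed.

End Deflation.

Lemma mulmx_colI n m (w : 'cV[F]_n) (r1 r2 : 'M[F]_(1, m)) :
  w != 0 -> w *m r1 = w *m r2 -> r1 = r2.
Proof.
case/matrix0Pn=> i [b]; rewrite ord1 => w_i /(congr1 (row i)).
by rewrite !row_mul [row i w]mx11_scalar !mul_scalar_mx mxE => /(scalerI w_i).
Qed.

Lemma horner_mx_eigen n (M : 'M[F]_n.+1) lam (w : 'cV_n.+1) p :
  M *m w = lam *: w -> horner_mx M p *m w = p.[lam] *: w.
Proof.
move=> Mw; elim/poly_ind: p => [|p c IH].
  by rewrite rmorph0 mul0mx horner0 scale0r.
rewrite rmorphD rmorphM /= horner_mx_X horner_mx_C hornerMXaddC mulmxDl.
rewrite -mulmxA Mw -scalemxAr IH mul_scalar_mx scalerA scalerDl.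
by rewrite mulrC.
Qed.

Lemma two_sided_eigenmx_outer n (M Q : 'M[F]_n) lam (w z : 'cV_n) :
  simple_eigenvalue M lam -> M *m w = lam *: w -> z^T *m M = lam *: z^T ->
  w != 0 -> z != 0 -> M *m Q = lam *: Q -> Q *m M = lam *: Q ->
  exists d, Q = d *: (w *m z^T).
Proof.
move=> simple Mw zM w_neq0 z_neq0 MQ QM.
have /matrix0Pn [i [? w_i]] := w_neq0; have /matrix0Pn [i' [? z_i']] := z_neq0.
rewrite ord1 in w_i; rewrite ord1 in z_i'.
have /fin_all_exists [c Qc] : forall b, exists c, col b Q = c *: w.
  move=> b; apply: (spans_eigenspace_simple Mw w_i simple).
  by rewrite !colE mulmxA MQ -scalemxAl.
pose r := \row_b c b.
have Qr : Q = w *m r.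
  apply/matrixP => a b; rewrite !mxE big_ord1 mxE.
  by have := congr1 (fun B : 'cV_n => B a 0) (Qc b); rewrite !mxE mulrC.
have rM : r *m M = lam *: r.
  by apply: (mulmx_colI w_neq0); rewrite mulmxA -Qr QM Qr scalemxAr.
have MTz : M^T *m z = lam *: z by rewrite -[z]trmxK -trmx_mul zM linearZ.
have simpleT : simple_eigenvalue M^T lam by rewrite /simple_eigenvalue char_poly_trmx.
have [d rd] : exists d, r^T = d *: z.
  by apply: (spans_eigenspace_simple MTz z_i' simpleT); rewrite -trmx_mul rM linearZ.
by exists d; rewrite Qr -[r]trmxK rd linearZ /= scalemxAr.
Qed.

Lemma simple_eigenvalue_outer_poly n (M : 'M[F]_n.+1) lam (w z : 'cV_n.+1) :
  simple_eigenvalue M lam -> M *m w = lam *: w -> z^T *m M = lam *: z^T ->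
  w != 0 -> z != 0 -> exists f : {poly F}, horner_mx M f = w *m z^T.
Proof.
move=> simple Mw zM w_neq0 z_neq0.
have : root (char_poly M) lam by apply/root_char_eigencolP; exists w.
rewrite -dvdp_XsubCl => /divpK; set q := _ %/ _ => charM; rewrite mulrC in charM.
have q_lam := (simple_eigenvalue_factor (esym charM)).1 simple.
set Q := horner_mx M q.
have CH : horner_mx M (('X - lam%:P) * q) = 0 by rewrite charM Cayley_Hamilton.
have MQ : M *m Q = lam *: Q.
  apply/eqP; rewrite -subr_eq0 -mul_scalar_mx -mulmxBl -CH rmorphM rmorphB /=.
  by rewrite horner_mx_X horner_mx_C.
have QM : Q *m M = lam *: Q.
  apply/eqP; rewrite -subr_eq0 -mul_mx_scalar -mulmxBr -CH mulrC rmorphM rmorphB /=.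
  by rewrite horner_mx_X horner_mx_C.
have [d Qd] := two_sided_eigenmx_outer simple Mw zM w_neq0 z_neq0 MQ QM.
have d_neq0 : d != 0.
  apply: contraNneq q_lam => d0; have := horner_mx_eigen q Mw.
  rewrite -/Q Qd d0 scale0r mul0mx => /esym/eqP.
  by rewrite scaler_eq0 (negPf w_neq0) orbF.
by exists (d^-1 *: q); rewrite linearZ /= -/Q Qd scalerA mulVf // scale1r.
Qed.

End Eigenspaces.

Section Positivity.
Variable R : realFieldType.

Lemma col_mx_gt0 m n (x : 'cV[R]_m) (y : 'cV[R]_n) :
  (forall i, 0 < x i 0) -> (forall i, 0 < y i 0) -> forall i, 0 < col_mx x y i 0.
Proof.
by move=> x_gt0 y_gt0 i; case: (split_ordP i) => p ->; rewrite (col_mxEu, col_mxEd).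
Qed.

Lemma dotmx_gt0 n (x y : 'cV[R]_n.+1) :
  (forall i, 0 < x i 0) -> (forall i, 0 < y i 0) -> 0 < (x^T *m y) 0 0.
Proof.
move=> x_gt0 y_gt0; rewrite mxE (bigD1 ord0) //= ltr_wpDr ?sumr_ge0 //.
  by move=> i _; rewrite mxE mulr_ge0 ?ltW.
by rewrite mxE mulr_gt0.
Qed.

Lemma algebraically_positive_simple n (M : 'M[R]_n.+1) lam (w z : 'cV_n.+1) :
  simple_eigenvalue M lam -> M *m w = lam *: w -> z^T *m M = lam *: z^T ->
  (forall i, 0 < w i 0) -> (forall i, 0 < z i 0) -> algebraically_positive M.
Proof.
move=> simple Mw zM w_gt0 z_gt0.
have pos_neq0 (x : 'cV[R]_n.+1) : (forall i, 0 < x i 0) -> x != 0.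
  by move=> x_gt0; apply/matrix0Pn; exists 0, 0; rewrite lt0r_neq0.
have [f fM] :=
  simple_eigenvalue_outer_poly simple Mw zM (pos_neq0 _ w_gt0) (pos_neq0 _ z_gt0).
by exists f => a b; rewrite fM !mxE big_ord1 mxE mulr_gt0.
Qed.

End Positivity.

Section DeltaProducts.
Variable R : nzRingType.

Lemma mul_delta_mx_col m n (i : 'I_m) (j : 'I_n) (x : 'cV[R]_n) :
  delta_mx i j *m x = x j 0 *: delta_mx i 0.
Proof.
apply/matrixP => a b; rewrite ord1 !mxE (bigD1 j) //= big1 ?addr0 => [|c /negPf c_j].
  by rewrite !mxE eqxx andbT mulr_natl mulr_natr.
by rewrite mxE c_j andbF mul0r.
Qed.

Lemma mul_row_delta_mx m n (i : 'I_m) (j : 'I_n) (y : 'rV[R]_m) :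
  y *m delta_mx i j = y 0 i *: delta_mx 0 j.
Proof.
apply/matrixP => a b; rewrite ord1 !mxE (bigD1 i) //= big1 ?addr0 => [|c /negPf c_i].
  by rewrite !mxE eqxx.
by rewrite mxE c_i mulr0.
Qed.

Lemma sum_ord_eq_nat k m : \sum_(q < k) ((q : nat) == m)%:R = (m < k)%:R :> R.
Proof.
have [m_lt|k_le] := ltnP m k; last first.
  by rewrite big1 // => q _; rewrite ltn_eqF // (leq_trans (ltn_ord q)).
rewrite (bigD1 (Ordinal m_lt)) //= eqxx big1 ?addr0 // => q.
by rewrite -val_eqE /= => /negPf ->.
Qed.

Definition diffmx k : 'M[R]_k := \matrix_(p, q) ((p == q)%:R - ((q : nat) == p.+1)%:R).

Lemma diffmx_const k (t : R) :
  diffmx k.+1 *m const_mx t = t *: delta_mx ord_max 0 :> 'cV_k.+1.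
Proof.
apply/matrixP => p b; rewrite ord1 !mxE.
under eq_bigr do rewrite !mxE.
rewrite -mulr_suml sumrB (eq_bigr (fun q : 'I_k.+1 => ((q : nat) == p)%:R)).
  2: by move=> q _; rewrite -val_eqE eq_sym.
rewrite !sum_ord_eq_nat ltn_ord ltnS ltn_neqAle -ltnS ltn_ord andbT -val_eqE /=.
by case: eqP => _ /=; [rewrite subr0 mul1r mulr1 | rewrite subrr mul0r mulr0].
Qed.

Lemma const_diffmx k (t : R) :
  const_mx t *m diffmx k.+1 = t *: delta_mx 0 ord0 :> 'rV_k.+1.
Proof.
apply/matrixP => b q; rewrite ord1 !mxE.
under eq_bigr do rewrite !mxE mulrBr.
rewrite sumrB -!mulr_sumr (eq_bigr (fun p : 'I_k.+1 => ((p : nat) == q)%:R)).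
  2: by move=> p _; rewrite -val_eqE.
rewrite sum_ord_eq_nat ltn_ord; case: q => [[|q] q_lt] /=.
  by rewrite big1_eq mulr0 subr0.
rewrite (eq_bigr (fun p : 'I_k.+1 => ((p : nat) == q)%:R)).
  2: by move=> p _; rewrite eqSS eq_sym.
by rewrite sum_ord_eq_nat (ltn_trans _ q_lt) ?subrr ?mulr0.
Qed.

End DeltaProducts.

Lemma diffmx_unit (F : fieldType) k : diffmx F k \in unitmx.
Proof.
rewrite unitmxE -det_tr det_trig.
  by rewrite big1 ?unitr1 // => p _; rewrite !mxE eqxx ltn_eqF ?subr0.
apply/is_trig_mxP => p q p_lt_q; rewrite !mxE -val_eqE /= gtn_eqF //.
by rewrite ltn_eqF ?subrr // ltnS ltnW.
Qed.

Section Bmat.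
Variables (F : fieldType) (k' n' : nat) (A : 'M[F]_n'.+1) (j : 'I_n'.+1) (lam : F).
Local Notation k := k'.+1.
Local Notation n := n'.+1.
Local Notation B := (Bmat k' A j lam).

Lemma Bmat_block :
  B = block_mx (lam *: (1%:M + diffmx F k)) (- lam *: delta_mx ord_max j)
               (- A ord0 j *: delta_mx ord0 ord0) (A + A ord0 j *: delta_mx ord0 j).
Proof.
apply/matrixP => p q; rewrite mxE.
case: (split_ordP p) => {}p ->; case: (split_ordP q) => {}q ->;
  rewrite ?block_mxEul ?block_mxEur ?block_mxEdl ?block_mxEdr !mxE.
- have [->|_] := eqVneq p q; first by rewrite ltn_eqF //=; ring.
  by case: (q == p.+1 :> nat) => /=; ring.
- by case: (_ && _) => /=; ring.
- by case: (_ && _) => /=; ring.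
- by case: andP => [[/eqP-> /eqP->]|_] /=; ring.
Qed.

Lemma Bmat_eigenvector (u : 'cV[F]_n) : A *m u = lam *: u ->
  B *m col_mx (const_mx (u j ord0)) u = lam *: col_mx (const_mx (u j ord0)) u.
Proof.
move=> Au; rewrite Bmat_block mul_block_col scale_col_mx; congr col_mx.
  rewrite -!scalemxAl mulmxDl mul1mx diffmx_const mul_delta_mx_col scalerDr.
  by rewrite scaleNr addrK.
rewrite mulmxDl Au -!scalemxAl !mul_delta_mx_col mxE.
by rewrite scaleNr addrCA addNr addr0.
Qed.

Lemma Bmat_left_eigenvector (v : 'cV[F]_n) : lam != 0 -> v^T *m A = lam *: v^T ->
  let z := col_mx (const_mx (A ord0 j * v ord0 ord0 / lam)) v in
  z^T *m B = lam *: z^T.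
Proof.
move=> lam_neq0 vA z; rewrite {}/z; set c := _ / lam.
have lam_c : lam * c = A ord0 j * v ord0 ord0 by rewrite mulrC divfK.
rewrite tr_col_mx trmx_const Bmat_block mul_row_block scale_row_mx; congr row_mx.
  rewrite -!scalemxAr mulmxDr mulmx1 const_diffmx mul_row_delta_mx scalerDr.
  by rewrite !scalerA lam_c mxE mulNr scaleNr addrK.
rewrite mulmxDr vA -!scalemxAr !mul_row_delta_mx !scalerA !mxE mulNr lam_c.
by rewrite scaleNr addrCA addNr addr0.
Qed.

Lemma Bmat_spans_eigenspace (u : 'cV[F]_n) : lam != 0 -> spans_eigenspace A lam u ->
  spans_eigenspace B lam (col_mx (const_mx (u j ord0)) u).
Proof.
move=> lam_neq0 spansA y; rewrite -[y]vsubmxK; set y1 := usubmx y; set y2 := dsubmx y.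
rewrite Bmat_block mul_block_col scale_col_mx => /eq_col_mx [top bot].
have y1_const : y1 = const_mx (y2 j 0).
  move: top; rewrite -!scalemxAl mulmxDl mul1mx mul_delta_mx_col scalerDr -addrA.
  rewrite -[X in _ = X]addr0 => /addrI/eqP; rewrite scaleNr subr_eq0.
  move=> /eqP/(scalerI lam_neq0).
  rewrite -diffmx_const => /(congr1 (mulmx (invmx (diffmx F k)))).
  by rewrite !(mulKmx (diffmx_unit F k)).
have Ay2 : A *m y2 = lam *: y2.
  move: bot; rewrite mulmxDl -!scalemxAl !mul_delta_mx_col {1}y1_const mxE.
  by rewrite scaleNr addrCA addNr addr0.
have [c y2_c] := spansA _ Ay2.
by exists c; rewrite y1_const y2_c scale_col_mx scalemx_const mxE.
Qed.
End Bmat.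

Unset Implicit Arguments.

Theorem theorem2p3 (R : realType) (k' n' : nat) (A : 'M[R]_n'.+1) (j : 'I_n'.+1)
  (lam : R) (u v : 'cV[R]_n'.+1) :
  0 < A ord0 j ->
  0 < lam ->
  simple_eigenvalue A lam ->
  A *m u = lam *: u ->
  v^T *m A = lam *: v^T ->
  (forall i, 0 < u i ord0) ->
  (forall i, 0 < v i ord0) ->
  let B := Bmat k' A j lam in
  let w : 'cV[R]_(k'.+1 + n'.+1) := col_mx (const_mx (u j ord0)) u in
  let z : 'cV[R]_(k'.+1 + n'.+1) := col_mx (const_mx (A ord0 j * v ord0 ord0 / lam)) v in
  [/\ simple_eigenvalue B lam,
      B *m w = lam *: w,
      z^T *m B = lam *: z^T
    & algebraically_positive B].
Proof.
move=> a_gt0 lam_gt0 simpleA Au vA u_gt0 v_gt0 B w z.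
have lam_neq0 : lam != 0 := lt0r_neq0 lam_gt0.
have Bw : B *m w = lam *: w by exact: Bmat_eigenvector.
have zB : z^T *m B = lam *: z^T by exact: Bmat_left_eigenvector.
have w_gt0 : forall i, 0 < w i 0.
  by apply: col_mx_gt0 => // i; rewrite mxE.
have z_gt0 : forall i, 0 < z i 0.
  by apply: col_mx_gt0 => // i; rewrite mxE divr_gt0 ?mulr_gt0.
have spansB : spans_eigenspace B lam w.
  apply: Bmat_spans_eigenspace lam_neq0 _.
  exact: spans_eigenspace_simple Au (lt0r_neq0 (u_gt0 j)) simpleA.
have simpleB : simple_eigenvalue B lam :=
  simple_eigenvalue_spans Bw (lt0r_neq0 (w_gt0 (lshift _ ord0))) zB
    (lt0r_neq0 (dotmx_gt0 z_gt0 w_gt0)) spansB.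
by split => //; exact: algebraically_positive_simple simpleB Bw zB w_gt0 z_gt0.
Qed.
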